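(* Let $L:\mathbb{R}\to[1,\infty)$ be given by $L(x):=1/\mathbf{P}(\sigma_0>x)$ for a strictly positive random variable $\sigma_0$, and suppose $L$ is slowly varying at infinity, i.e. $\lim_{u\to\infty}L(uv)/L(u)=1$ for every $v>0$. Let $\varepsilon>\varepsilon'>0$ and let $x_t,y_t$ be non-decreasing functions of $t$ with $x_t,y_t\to\infty$. Then there exists $t'>0$ such that \[ \{t>t': L(x_t)>(1+\varepsilon)L(y_t)\}\subseteq\{t>t': L(x_t-y_t)>(1+\varepsilon')L(y_t)\}.\] *)

From HB Require Import structures.
From mathcomp Require Import all_boot all_order all_algebra.
From mathcomp Require Import all_classical all_reals all_analysis.
Set Implicit Arguments. Unset Strict Implicit. Unset Printing Implicit Defensive.
Import Order.TTheory GRing.Theory Num.Theory numFieldNormedType.Exports.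
Local Open Scope classical_set_scope.
Local Open Scope ring_scope.

Definition Ltail d (T : measurableType d) (R : realType) (P : probability T R)
  (sigma0 : {RV P >-> R}) (x : R) : R :=
  (fine (P [set w | x < sigma0 w]))^-1.

Definition slowly_varying (R : realType) (L : R -> R) : Prop :=
  forall v : R, 0 < v -> (L (u * v) / L u) @[u --> +oo] --> (1 : R).

From HB Require Import structures.
From mathcomp Require Import all_boot all_order all_algebra.
From mathcomp Require Import all_classical all_reals all_analysis.
From mathcomp Require Import lra.

Set Implicit Arguments.
Unset Strict Implicit.
Unset Printing Implicit Defensive.
Import Order.TTheory GRing.Theory Num.Theory numFieldNormedType.Exports.
Local Open Scope classical_set_scope.
Local Open Scope ring_scope.

(** Put c := (1 + eps') / (1 + eps) < 1. Slow variation gives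
    c L(x) < L(x/2) for large x, so L(x) > (1 + eps) L(y) yields
    (1 + eps') L(y) < L(x/2). If y <= x/2, monotonicity of L gives
    L(x/2) <= L(x - y) and we are done; if y > x/2, it gives
    L(x/2) <= L(y) < (1 + eps') L(y), which is impossible. *)

Section tail_function.
Variables (d : measure_display) (T : measurableType d) (R : realType).
Variables (P : probability T R) (sigma0 : {RV P >-> R}).

Lemma measurable_tail_event (a : R) : measurable [set w | a < sigma0 w].
Proof.
have -> : [set w | a < sigma0 w] = sigma0 @^-1` `]a, +oo[%classic.
  by apply/seteqP; split=> w /=; rewrite in_itv /= andbT.
by rewrite -[_ @^-1` _]setTI; apply: measurable_funP.
Qed.

Hypothesis tail_pos : forall a : R, (0 < P [set w | (a < sigma0 w)%R])%E.

Lemma fine_tail_gt0 (a : R) : 0 < fine (P [set w | a < sigma0 w]).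
Proof.
apply: fine_gt0; rewrite tail_pos /=.
by rewrite (le_lt_trans (probability_le1 _ (measurable_tail_event a))) ?ltry.
Qed.

Lemma Ltail_gt0 (a : R) : 0 < Ltail sigma0 a.
Proof. by rewrite invr_gt0 fine_tail_gt0. Qed.

Lemma Ltail_nondecreasing : {homo Ltail sigma0 : a b / a <= b}.
Proof.
move=> a b ab; rewrite /Ltail lef_pV2 ?posrE ?fine_tail_gt0 //.
apply: fine_le; rewrite ?fin_num_measure //; try exact: measurable_tail_event.
apply: le_measure; rewrite ?inE; try exact: measurable_tail_event.
by move=> w /= /(le_lt_trans ab).
Qed.

End tail_function.

Lemma slowly_varying_half (R : realType) (L : R -> R) (c : R) :
  (forall u, 0 < L u) -> slowly_varying L -> c < 1 ->
  \forall u \near +oo, c * L u < L (u / 2).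
Proof.
move=> L_gt0 L_sv c_lt1.
have : \forall u \near +oo, c < L (u / 2) / L u.
  by apply: (cvgr_gt 1) => //; apply: L_sv; rewrite invr_gt0.
by apply: filterS => u; rewrite ltr_pdivlMr.
Qed.

Lemma lt_at_half_lt_at_diff (R : realFieldType) (L : R -> R) (a b k : R) :
  {homo L : s t / s <= t} -> 0 <= L b -> 1 <= k ->
  k * L b < L (a / 2) -> k * L b < L (a - b).
Proof.
move=> L_homo Lb_ge0 k_ge1 kLb_lt.
case: (leP b (a / 2)) => [b_le | a_lt].
  by apply: (lt_le_trans kLb_lt); apply: L_homo; lra.
have : L (a / 2) <= L b by apply: L_homo; rewrite ltW.
have : L b <= k * L b by rewrite ler_peMl.
lra.
Qed.

Theorem lemma3p3 (d : measure_display) (T : measurableType d) (R : realType)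
  (P : probability T R) (sigma0 : {RV P >-> R})
  (sigma0_pos : forall w, 0 < sigma0 w)
  (tail_pos : forall x : R, (0 < P [set w | (x < sigma0 w)%R])%E)
  (HL : slowly_varying (Ltail sigma0))
  (eps eps' : R) (heps' : 0 < eps') (heps : eps' < eps)
  (x y : R -> R)
  (hx : {homo x : s t / s <= t}) (hy : {homo y : s t / s <= t})
  (hxoo : x t @[t --> +oo] --> +oo) (hyoo : y t @[t --> +oo] --> +oo) :
  exists t' : R, 0 < t' /\
    [set t | t' < t /\ (1 + eps) * Ltail sigma0 (y t) < Ltail sigma0 (x t)]
    `<=` [set t | t' < t /\
           (1 + eps') * Ltail sigma0 (y t) < Ltail sigma0 (x t - y t)].
Proof.
set L := Ltail sigma0; set c := (1 + eps') / (1 + eps).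
have L_gt0 : forall u, 0 < L u := Ltail_gt0 tail_pos.
have c_gt0 : 0 < c by rewrite divr_gt0; lra.
have c_lt1 : c < 1 by rewrite ltr_pdivrMr; lra.
have c_eps : c * (1 + eps) = 1 + eps' by rewrite mulfVK //; lra.
have [M [_ x_half]] := hxoo _ (slowly_varying_half L_gt0 HL c_lt1).
exists (Num.max M 1); split=> [|t [tM Lxy]]; first by rewrite lt_max ltr01 orbT.
split=> //; apply: lt_at_half_lt_at_diff; [exact: (Ltail_nondecreasing tail_pos)|
  exact/ltW/L_gt0| lra|].
have Mt : M < t by move: tM; rewrite gt_max => /andP[].
rewrite -c_eps -mulrA; apply: (@lt_trans _ _ (c * L (x t))).
  by rewrite ltr_pM2l.
exact: (x_half t Mt).
Qed.
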